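(* Let $p$ be a stochastic choice function on $X$. The following are equivalent: (i) $p$ is rationalized by an MSC $\langle Q,\nu\rangle$ such that for every $M\in\mathcal N$ the matrix $Q(M)$ is fully comparable and reversible on $M$; (ii) $p$ is positive and satisfies independence of irrelevant alternatives, i.e. $p(i,\{i,j\})\,p(j,M)=p(j,\{i,j\})\,p(i,M)$ for all $M\in\mathcal N$ and $i,j\in M$; (iii) $p$ is rationalized by an MSC $\langle Q,\nu\rangle$ for which there is a function $u:X\to(0,\infty)$ such that for all $M\in\mathcal N$ and distinct $i,j\in M$, $q_{ij}(M)>0$ and $\dfrac{q_{ij}(M)}{q_{ji}(M)}=\dfrac{u(j)}{u(i)}$.
   Context: $X$ is a finite set of alternatives; a menu is a nonempty subset of $X$, and $\mathcal N$ denotes the set of all menus. A stochastic choice function is a map $p:X\times\mathcal N\to[0,1]$ with $\sum_{i\in M}p(i,M)=1$ and $p(i,M)=0$ for $i\notin M$; $p(\cdot,M)$ denotes the row vector $(p(i,M))_{i\in M}$. $p$ is positive if $p(i,M)>0$ for all $M\in\mathcal N$ and $i\in M$. An MSC (Markov stochastic choice model) $\langle Q,\nu\rangle$ consists of, for every menu $M$, a matrix $Q(M)=(q_{ij}(M))_{i,j\in M}$ with nonnegative entries and a probability distribution $\nu_M$ on $M$, such that for all $M\in\mathcal N$ and distinct $i,j\in M$: (A1) $q_{ii}(M)=1-\sum_{k\neq i}q_{ik}(M)>0$; (A2) if $q_{ij}(\{i,j\})=0$ then $q_{ji}(\{i,j\})>0$; (A3) $q_{ij}(\{i,j\})\,q_{ji}(M)=q_{ji}(\{i,j\})\,q_{ij}(M)$.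 For a right stochastic matrix $Q$ on $M$ and a distribution $\nu$ on $M$ define $\rho(\nu,Q)=\lim_{\alpha\to0^+}\sum_{t\ge0}\alpha(1-\alpha)^t\nu Q^t$ (the limit exists and satisfies $\rho(\nu,Q)(I-Q)=0$). $p$ is rationalized by the MSC $\langle Q,\nu\rangle$ if $p(\cdot,M)=\rho(\nu_M,Q(M))$ for every $M\in\mathcal N$. $Q(M)$ is fully comparable if $q_{ij}(M)>0$ for all distinct $i,j\in M$. $Q(M)$ is reversible on $M$ if, with $\rho=\rho(\nu_M,Q(M))$, $q_{ji}(M)\rho_j=\rho_i\,q_{ij}(M)$ for all $i,j\in M$. *)

From HB Require Import structures.
From mathcomp Require Import all_boot all_order all_algebra.
From mathcomp Require Import all_classical all_reals all_analysis.
Set Implicit Arguments. Unset Strict Implicit. Unset Printing Implicit Defensive.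
Import Order.TTheory GRing.Theory Num.Theory.
Import numFieldNormedType.Exports.
Local Open Scope ring_scope.


Section MSC.
Variables (R : realType) (X : finType).

(* A menu is a nonempty M : {set X}.  A stochastic choice function is
   p : X -> {set X} -> R, where p i M stands for p(i,M). *)
Definition stochastic_choice (p : X -> {set X} -> R) : Prop :=
  forall M : {set X}, M != finset.set0 ->
    (forall i, 0 <= p i M /\ p i M <= 1) /\
    (\sum_(i in M) p i M = 1) /\
    (forall i, i \notin M -> p i M = 0).

Definition positive_scf (p : X -> {set X} -> R) : Prop :=
  forall M : {set X}, M != finset.set0 -> forall i, i \in M -> 0 < p i M.

Definition IIA (p : X -> {set X} -> R) : Prop :=
  forall M : {set X}, M != finset.set0 -> forall i j, i \in M -> j \in M ->
    p i [set i; j]%SET * p j M = p j [set i; j]%SET * p i M.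

(* Q M i j stands for q_ij(M) (only its entries with i, j in M matter);
   nu M i stands for nu_M(i). *)

Fixpoint qpow (Q : X -> X -> R) (M : {set X}) (t : nat) : X -> X -> R :=
  match t with
  | 0 => fun i j => (i == j)%:R
  | t'.+1 => fun i j => \sum_(k in M) qpow Q M t' i k * Q k j
  end.

Definition distQ (nu : X -> R) (Q : X -> X -> R) (M : {set X}) (t : nat) (j : X) : R :=
  \sum_(i in M) nu i * qpow Q M t i j.

Definition abel (nu : X -> R) (Q : X -> X -> R) (M : {set X}) (a : R) (j : X) : R :=
  limn (fun n => \sum_(0 <= t < n) (a * (1 - a) ^+ t * distQ nu Q M t j)).

Definition rho (nu : X -> R) (Q : X -> X -> R) (M : {set X}) (j : X) : R :=
  lim ((abel nu Q M a j @[a --> 0^'+])%classic).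

Definition is_MSC (Q : {set X} -> X -> X -> R) (nu : {set X} -> X -> R) : Prop :=
  forall M : {set X}, M != finset.set0 ->
    (forall i j, i \in M -> j \in M -> 0 <= Q M i j) /\
    (forall i, i \in M -> 0 <= nu M i) /\ (\sum_(i in M) nu M i = 1) /\
    (forall i, i \in M ->
       Q M i i = 1 - \sum_(k in M | k != i) Q M i k /\ 0 < Q M i i) /\
    (forall i j, i \in M -> j \in M -> i != j ->
       (Q [set i; j]%SET i j = 0 -> 0 < Q [set i; j]%SET j i) /\
       Q [set i; j]%SET i j * Q M j i = Q [set i; j]%SET j i * Q M i j).

Definition rationalizes (p : X -> {set X} -> R)
    (Q : {set X} -> X -> X -> R) (nu : {set X} -> X -> R) : Prop :=
  forall M : {set X}, M != finset.set0 -> forall i, i \in M -> p i M = rho (nu M) (Q M) M i.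

Definition fully_comparable (Q : {set X} -> X -> X -> R) (M : {set X}) : Prop :=
  forall i j, i \in M -> j \in M -> i != j -> 0 < Q M i j.

Definition reversible (Q : {set X} -> X -> X -> R) (nu : {set X} -> X -> R)
    (M : {set X}) : Prop :=
  forall i j, i \in M -> j \in M ->
    Q M j i * rho (nu M) (Q M) M j = rho (nu M) (Q M) M i * Q M i j.

End MSC.

(* For a Markov matrix Q on M satisfying detailed balance u_i q_ij = u_j q_ji
   with u > 0, the Abel average S = sum_t a (1-a)^t nu Q^t solves
   S = a nu + (1 - a) S Q; at the index maximizing S_i / u_i this forces the
   spread of the ratios S_i / u_i to be O(a), so S is within O(a) of u / sum u
   and rho(nu, Q) = u / sum u is a Luce rule.  A Luce rule is positive and
   satisfies IIA.  Conversely, a positive p with IIA is rationalized by the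
   chain Q(M) = (I + 1 p(., M)) / 2, which is reversible with respect to
   p(., M) and whose off-diagonal ratios are p(j, X) / p(i, X) by IIA.
   Finally, (i) already forces (ii): reversibility with full comparability
   gives p(i, M) q_ij(M) = p(j, M) q_ji(M), and (A3) transports the ratio
   q_ij / q_ji from the pair {i, j} to M. *)

From HB Require Import structures.
From mathcomp Require Import all_boot all_order all_algebra.
From mathcomp Require Import all_classical all_reals all_analysis.
From mathcomp Require Import ring lra.
Import Order.TTheory GRing.Theory Num.Theory.
Import numFieldNormedType.Exports.

Set Implicit Arguments.
Unset Strict Implicit.
Unset Printing Implicit Defensive.
Local Open Scope ring_scope.

Definition luce (R : realType) (X : finType) (u : X -> R) (M : {set X}) (j : X) : R :=
  u j / \sum_(k in M) u k.

Section MarkovChain.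
Variables (R : realType) (X : finType) (M : {set X}) (Q : X -> X -> R) (nu : X -> R).
Hypotheses
  (Q_ge0 : forall i j, i \in M -> j \in M -> 0 <= Q i j)
  (sumQ_row : forall i, i \in M -> \sum_(j in M) Q i j = 1)
  (nu_ge0 : forall i, i \in M -> 0 <= nu i)
  (sum_nu : \sum_(i in M) nu i = 1).

Local Notation s := (distQ nu Q M).

Lemma distQS t j : s t.+1 j = \sum_(k in M) s t k * Q k j.
Proof.
rewrite /distQ /=; under eq_bigr do rewrite big_distrr.
rewrite exchange_big; apply: eq_bigr => k _.
by rewrite big_distrl; apply: eq_bigr => i _; exact: mulrA.
Qed.

Lemma distQ0 j : j \in M -> s 0 j = nu j.
Proof.
move=> jM; rewrite /distQ /= (bigD1 j) //= eqxx mulr1 big1 ?addr0 //.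
by move=> i /andP[_ /negbTE ->]; rewrite mulr0.
Qed.

Lemma distQ_ge0 t j : j \in M -> 0 <= s t j.
Proof.
elim: t j => [|t IH] j jM; first by rewrite distQ0 // nu_ge0.
by rewrite distQS; apply: sumr_ge0 => k kM; rewrite mulr_ge0 ?IH ?Q_ge0.
Qed.

Lemma sum_distQ t : \sum_(j in M) s t j = 1.
Proof.
elim: t => [|t IH]; first by rewrite -sum_nu; apply: eq_bigr => j; apply: distQ0.
under eq_bigr do rewrite distQS.
rewrite exchange_big /= -IH; apply: eq_bigr => k kM.
by rewrite -big_distrr /= sumQ_row // mulr1.
Qed.

Lemma distQ_le1 t j : j \in M -> s t j <= 1.
Proof.
move=> jM; rewrite -(sum_distQ t) (bigD1 j) //= lerDl.
by apply: sumr_ge0 => k /andP[kM _]; apply: distQ_ge0.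
Qed.

Lemma sum_geometric_weights (a : R) n :
  \sum_(0 <= t < n) a * (1 - a) ^+ t = 1 - (1 - a) ^+ n.
Proof.
elim: n => [|n IH]; first by rewrite big_geq // expr0 subrr.
by rewrite big_nat_recr //= IH exprSr; ring.
Qed.

Section AbelAverage.
Variable a : R.
Hypotheses (a_gt0 : 0 < a) (a_lt1 : a < 1).

Definition abel_partial n j := \sum_(0 <= t < n) (a * (1 - a) ^+ t * s t j).

Let weight_ge0 t : 0 <= a * (1 - a) ^+ t.
Proof. by rewrite mulr_ge0 ?(ltW a_gt0) // exprn_ge0 // subr_ge0 ltW. Qed.

Lemma abel_partial_ge0 n j : j \in M -> 0 <= abel_partial n j.
Proof. by move=> jM; apply: sumr_ge0 => t _; rewrite mulr_ge0 ?distQ_ge0. Qed.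

Lemma abel_partial_le1 n j : j \in M -> abel_partial n j <= 1.
Proof.
move=> jM; apply: (le_trans (y := \sum_(0 <= t < n) a * (1 - a) ^+ t)).
  by apply: ler_sum => t _; rewrite ler_piMr ?distQ_le1.
by rewrite sum_geometric_weights gerBl exprn_ge0 // subr_ge0 ltW.
Qed.

Lemma abel_partial_cvg j : j \in M ->
  (abel_partial n j @[n --> \oo] --> abel nu Q M a j)%classic.
Proof.
move=> jM; apply: nondecreasing_is_cvgn.
  move=> n m nm; rewrite /abel_partial (big_cat_nat (leq0n n) nm) /= lerDl.
  by apply: sumr_ge0 => t _; rewrite mulr_ge0 ?distQ_ge0.
by exists 1 => _ [n _ <-]; apply: abel_partial_le1.
Qed.

Lemma abel_partialS n j : j \in M ->
  abel_partial n.+1 j = a * nu j + (1 - a) * \sum_(k in M) abel_partial n k * Q k j.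
Proof.
move=> jM; rewrite /abel_partial big_nat_recl // expr0 mulr1 distQ0 //.
congr (_ + _); under eq_bigr do rewrite distQS big_distrr.
rewrite exchange_big /= big_distrr; apply: eq_bigr => k _.
rewrite big_distrl big_distrr; apply: eq_bigr => t _ /=.
by rewrite exprSr; ring.
Qed.

Local Notation S := (abel nu Q M a).

Lemma abel_fixpoint j : j \in M ->
  S j = a * nu j + (1 - a) * \sum_(k in M) S k * Q k j.
Proof.
move=> jM.
have shifted : (abel_partial n.+1 j @[n --> \oo] --> S j)%classic.
  by rewrite (cvg_shiftS (abel_partial^~ j)); apply: abel_partial_cvg.
suff limit : (abel_partial n.+1 j @[n --> \oo] -->
    a * nu j + (1 - a) * \sum_(k in M) S k * Q k j)%classic.
  exact: cvg_unique shifted limit.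
under eq_cvg do rewrite abel_partialS //.
apply: cvgD; first exact: cvg_cst.
apply: cvgMl_tmp; apply: (cvg_big (op := +%R) (x0 := 0) (P := fun k => k \in M)).
  exact: add_continuous.
by move=> k kM; apply: cvgMr_tmp; apply: abel_partial_cvg.
Qed.

Lemma abel_ge0 j : j \in M -> 0 <= S j.
Proof.
move=> jM; rewrite /abel; apply: limr_ge.
  by apply: (cvgP (abel nu Q M a j)); apply: abel_partial_cvg.
by apply: nearW => n; apply: abel_partial_ge0.
Qed.

Lemma sum_abel : \sum_(j in M) S j = 1.
Proof.
have : \sum_(j in M) S j = a + (1 - a) * \sum_(j in M) S j.
  rewrite {1}(eq_bigr _ abel_fixpoint).
  rewrite big_split /= -!big_distrr /= sum_nu mulr1 exchange_big /=.
  congr (_ + _ * _); apply: eq_bigr => k kM.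
  by rewrite -big_distrr /= sumQ_row // mulr1.
set x := \sum_(j in M) S j => x_eq.
have /eqP : a * (x - 1) = 0 by rewrite -[RHS](subrr x) {3}x_eq; ring.
by rewrite mulf_eq0 gt_eqF //= subr_eq0 => /eqP.
Qed.

End AbelAverage.

Section Reversible.
Variable u : X -> R.
Hypotheses
  (Q_gt0 : forall i j, i \in M -> j \in M -> 0 < Q i j)
  (u_gt0 : forall i, i \in M -> 0 < u i)
  (detailed_balance : forall i j, i \in M -> j \in M -> u i * Q i j = u j * Q j i).

Local Notation C := (\sum_(k in M) \sum_(l in M) (u k * Q k l)^-1).

Let inv_flux_ge0 k l : k \in M -> l \in M -> 0 <= (u k * Q k l)^-1.
Proof. by move=> kM lM; rewrite invr_ge0 ltW // mulr_gt0 ?u_gt0 ?Q_gt0. Qed.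

Lemma abel_balance a i : 0 < a -> a < 1 -> i \in M ->
  let r k := abel nu Q M a k / u k in
  (1 - a) * (u i * \sum_(k in M) Q i k * (r i - r k)) = a * (nu i - abel nu Q M a i).
Proof.
move=> a_gt0 a_lt1 iM r.
have Sr k : k \in M -> abel nu Q M a k = u k * r k.
  by move=> kM; rewrite /r mulrC divfK // gt_eqF ?u_gt0.
suff -> : u i * \sum_(k in M) Q i k * (r i - r k) =
    abel nu Q M a i - \sum_(k in M) abel nu Q M a k * Q k i.
  by rewrite abel_fixpoint //; ring.
rewrite mulr_sumr (eq_bigr (fun k => Q i k * abel nu Q M a i - abel nu Q M a k * Q k i)).
  by rewrite sumrB -big_distrl /= sumQ_row // mul1r.
move=> k kM; rewrite (Sr i iM) (Sr k kM).
transitivity (Q i k * (u i * r i) - (u i * Q i k) * r k); first by ring.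
by rewrite detailed_balance //; ring.
Qed.

Lemma abel_ratio_spread a i k : 0 < a -> a < 1 -> i \in M -> k \in M ->
  (abel nu Q M a i / u i - abel nu Q M a k / u k) * (1 - a) <= C * a.
Proof.
move=> a_gt0 a_lt1 iM kM; set r := fun x => abel nu Q M a x / u x.
have [m mM r_max] := arg_maxP r iM.
have uQ_gt0 : 0 < u m * Q m k by rewrite mulr_gt0 ?u_gt0 ?Q_gt0.
have spread_le : (r m - r k) * (1 - a) <= (u m * Q m k)^-1 * a.
  rewrite ler_pdivlMl //.
  have -> : u m * Q m k * ((r m - r k) * (1 - a)) =
      (1 - a) * (u m * (Q m k * (r m - r k))) by ring.
  apply: (@le_trans _ _ ((1 - a) * (u m * \sum_(l in M) Q m l * (r m - r l)))).
    rewrite ler_pM2l ?subr_gt0 // ler_pM2l ?u_gt0 // (bigD1 k) //= lerDl.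
    apply: sumr_ge0 => l /andP[lM _].
    by apply: mulr_ge0; [rewrite ltW ?Q_gt0 | rewrite subr_ge0; apply: r_max].
  rewrite abel_balance // ler_piMr ?(ltW a_gt0) //.
  by have := abel_ge0 a_gt0 a_lt1 mM; have := distQ_le1 0 mM; rewrite distQ0 //; lra.
have uQ_le : (u m * Q m k)^-1 <= C.
  rewrite (bigD1 m) //= (bigD1 k) //= -addrA lerDl.
  apply: addr_ge0; first by apply: sumr_ge0 => l /andP[lM _]; apply: inv_flux_ge0.
  by apply: sumr_ge0 => l /andP[lM _]; apply: sumr_ge0 => l' l'M; apply: inv_flux_ge0.
apply: le_trans _ (le_trans spread_le (ler_wpM2r (ltW a_gt0) uQ_le)).
by rewrite ler_pM2r ?subr_gt0 // lerD2r; apply: r_max.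
Qed.

Lemma abel_near_luce a j : 0 < a -> a < 1 -> j \in M ->
  `|abel nu Q M a j - luce u M j| * (1 - a) <= u j * C * a.
Proof.
move=> a_gt0 a_lt1 jM; rewrite /luce; set Z := \sum_(k in M) u k.
set r := fun x => abel nu Q M a x / u x.
have Sr k : k \in M -> abel nu Q M a k = u k * r k.
  by move=> kM; rewrite /r mulrC divfK // gt_eqF ?u_gt0.
have Z_gt0 : 0 < Z.
  rewrite /Z (bigD1 j) //= ltr_pwDl ?u_gt0 //.
  by apply: sumr_ge0 => k /andP[kM _]; rewrite ltW ?u_gt0.
have [mx mxM r_max] := arg_maxP r jM.
have [mn mnM r_min] := arg_minP r jM.
have Z_r_max : 1 <= Z * r mx.
  rewrite -(sum_abel a_gt0 a_lt1) /Z mulr_suml; apply: ler_sum => k kM.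
  by rewrite Sr // ler_pM2l ?u_gt0 //; apply: r_max.
have Z_r_min : Z * r mn <= 1.
  rewrite -(sum_abel a_gt0 a_lt1) /Z mulr_suml; apply: ler_sum => k kM.
  by rewrite Sr // ler_pM2l ?u_gt0 //; apply: r_min.
have /andP[lo hi] : r mn <= Z^-1 <= r mx.
  by rewrite -[Z^-1]mulr1 ler_pdivlMl // ler_pdivrMl // Z_r_min Z_r_max.
have dist_le : `|r j - Z^-1| <= r mx - r mn.
  have rj_le : r j <= r mx := r_max j jM; have rj_ge := r_min j jM.
  by rewrite ler_norml; apply/andP; split; lra.
rewrite (Sr j jM) -mulrBr normrM gtr0_norm ?u_gt0 // -!mulrA ler_pM2l ?u_gt0 //.
apply: le_trans (abel_ratio_spread a_gt0 a_lt1 mxM mnM).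
by rewrite ler_pM2r ?subr_gt0.
Qed.

Lemma rho_reversible j : j \in M -> rho nu Q M j = luce u M j.
Proof.
move=> jM; apply: cvg_lim => //; apply/cvgrPdist_le => eps eps_gt0.
set K := u j * C.
have K_ge0 : 0 <= K.
  apply: mulr_ge0; first by rewrite ltW ?u_gt0.
  by apply: sumr_ge0 => k kM; apply: sumr_ge0 => l lM; apply: inv_flux_ge0.
have e_gt0 : 0 < eps / (2 * K + 1) by rewrite divr_gt0 //; lra.
near=> a.
have a_gt0 : 0 < a by near: a; exact: nbhs_right_gt.
have a_lt_half : a < 1 / 2 by near: a; apply: nbhs_right_lt; lra.
have a_small : a < eps / (2 * K + 1) by near: a; apply: nbhs_right_lt.
have a_lt1 : a < 1 by lra.
have := abel_near_luce a_gt0 a_lt1 jM; rewrite distrC -/K.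
set x := `|_| => x_le; have x_ge0 : 0 <= x := normr_ge0 _.
(* (1 - a) >= 1/2 turns x (1 - a) <= K a into x <= 2 K a < eps *)
have : a * (2 * K + 1) < eps by rewrite -ltr_pdivlMr //; lra.
nra.
Unshelve. all: by end_near.
Qed.

End Reversible.
End MarkovChain.

Lemma mem_set_neq0 (T : finType) (A : {set T}) x : x \in A -> A != finset.set0.
Proof. by move=> xA; apply/set0Pn; exists x. Qed.

Section ChoiceFunctions.
Variables (R : realType) (X : finType).
Implicit Types (p : X -> {set X} -> R) (u : X -> R) (M : {set X}).

Lemma luce_gt0 u M j : (forall x, x \in M -> 0 < u x) -> j \in M -> 0 < luce u M j.
Proof.
move=> u_gt0 jM; rewrite divr_gt0 ?u_gt0 // (bigD1 j) //= ltr_pwDl ?u_gt0 //.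
by apply: sumr_ge0 => k /andP[kM _]; rewrite ltW ?u_gt0.
Qed.

Lemma luce_positive_IIA p u : (forall x, 0 < u x) ->
  (forall M, M != finset.set0 -> forall j, j \in M -> p j M = luce u M j) ->
  positive_scf p /\ IIA p.
Proof.
move=> u_gt0 p_luce; split=> M M0 i; first by move=> iM; rewrite p_luce ?luce_gt0.
move=> j iM jM; have iN : i \in [set i; j] by rewrite !inE eqxx.
by rewrite !p_luce ?(mem_set_neq0 iN) ?(mem_set_neq0 iM) ?inE ?eqxx ?orbT // /luce; ring.
Qed.

Lemma MSC_balanced_luce p Q nu u :
  is_MSC Q nu -> rationalizes p Q nu -> (forall x, 0 < u x) ->
  (forall M, M != finset.set0 -> forall i j, i \in M -> j \in M -> i != j ->
     0 < Q M i j /\ Q M i j / Q M j i = u j / u i) ->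
  forall M, M != finset.set0 -> forall j, j \in M -> p j M = luce u M j.
Proof.
move=> Q_MSC p_rat u_gt0 Q_ratio M M0 j jM; rewrite p_rat //.
have [Q_ge0 [nu_ge0 [sum_nu [Q_diag _]]]] := Q_MSC M M0.
have Q_gt0 i k : i \in M -> k \in M -> 0 < Q M i k.
  move=> iM kM; have [<-|ik] := eqVneq i k; first exact: (Q_diag i iM).2.
  exact: (Q_ratio M M0 i k iM kM ik).1.
apply: rho_reversible => // [i iM|i k iM kM].
- by rewrite (bigD1 i) //= (Q_diag i iM).1 subrK.
- have [<- //|ik] := eqVneq i k.
  have := (Q_ratio M M0 i k iM kM ik).2.
  have Qki_neq0 : Q M k i != 0 by rewrite gt_eqF ?Q_gt0.
  have ui_neq0 : u i != 0 by rewrite gt_eqF ?u_gt0.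
  move/eqP; rewrite eqr_div // => /eqP.
  by rewrite mulrC => ->.
Qed.

Lemma reversible_rationalized_positive p Q nu :
  stochastic_choice p -> rationalizes p Q nu ->
  (forall M, M != finset.set0 -> fully_comparable Q M /\ reversible Q nu M) ->
  positive_scf p.
Proof.
move=> p_scf p_rat Q_rev M M0 i iM; have [p_bnd [sum_p _]] := p_scf M M0.
have [Q_fc Q_rv] := Q_rev M M0.
rewrite lt_def (p_bnd i).1 andbT; apply/negP => /eqP pi0.
suff p0 j : j \in M -> p j M = 0.
  by move: sum_p; rewrite big1 // => /eqP; rewrite eq_sym oner_eq0.
move=> jM; have [<- //|ij] := eqVneq i j.
have /eqP := Q_rv i j iM jM; rewrite -!p_rat // pi0 mul0r mulf_eq0.
by rewrite gt_eqF ?Q_fc // 1?eq_sym //= => /eqP.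
Qed.

Lemma reversible_rationalized_IIA p Q nu :
  is_MSC Q nu -> rationalizes p Q nu ->
  (forall M, M != finset.set0 -> fully_comparable Q M /\ reversible Q nu M) ->
  IIA p.
Proof.
move=> Q_MSC p_rat Q_rev M M0 i j iM jM; have [<- //|ij] := eqVneq i j.
set N := [set i; j]; have iN : i \in N by rewrite !inE eqxx.
have jN : j \in N by rewrite !inE eqxx orbT.
have N0 := mem_set_neq0 iN.
have [QN_fc QN_rv] := Q_rev N N0; have [QM_fc QM_rv] := Q_rev M M0.
have revN := QN_rv i j iN jN; rewrite -!p_rat // in revN.
have revM := QM_rv i j iM jM; rewrite -!p_rat // in revM.
have [_ [_ [_ [_ Q_pair]]]] := Q_MSC M M0; have [_ A3] := Q_pair i j iM jM ij.
have QN_neq0 : Q N i j != 0 by rewrite gt_eqF ?QN_fc.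
have QM_neq0 : Q M j i != 0 by rewrite gt_eqF ?QM_fc // eq_sym.
apply: (mulIf (mulf_neq0 QN_neq0 QM_neq0)).
transitivity ((p i N * Q N i j) * (Q M j i * p j M)); first by ring.
rewrite -revN revM.
transitivity (p j N * p i M * (Q N j i * Q M i j)); first by ring.
by rewrite -A3.
Qed.

Definition luce_chain p M i j := if i == j then (1 + p i M) / 2 else p j M / 2.

Section LuceChain.
Variable p : X -> {set X} -> R.
Hypotheses (p_scf : stochastic_choice p) (p_pos : positive_scf p) (p_IIA : IIA p).

Lemma IIA_ratio_setT M i j : M != finset.set0 -> i \in M -> j \in M ->
  p j M * p i [set: X]%SET = p i M * p j [set: X]%SET.
Proof.
move=> M0 iM jM; have iN : i \in [set i; j] by rewrite !inE eqxx.
have T0 := mem_set_neq0 (finset.in_setT i).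
have pN_neq0 : p i [set i; j] != 0 by rewrite gt_eqF // p_pos ?(mem_set_neq0 iN).
apply: (mulfI pN_neq0).
transitivity ((p i [set i; j] * p j M) * p i [set: X]%SET); first by ring.
rewrite (p_IIA M0 iM jM).
transitivity (p i M * (p j [set i; j] * p i [set: X]%SET)); first by ring.
by rewrite -(p_IIA T0 (finset.in_setT i) (finset.in_setT j)); ring.
Qed.

Lemma luce_chain_gt0 M i j : M != finset.set0 -> i \in M -> j \in M -> 0 < luce_chain p M i j.
Proof.
move=> M0 iM jM; rewrite /luce_chain; case: eqP => _; last by rewrite divr_gt0 ?p_pos.
by have := ((p_scf M0).1 i).1; lra.
Qed.

Lemma sum_luce_chain M i : M != finset.set0 -> i \in M -> \sum_(j in M) luce_chain p M i j = 1.
Proof.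
move=> M0 iM; have [_ [sum_p _]] := p_scf M0.
rewrite (bigD1 i) //= {1}/luce_chain eqxx (eq_bigr (fun k => p k M / 2)); last first.
  by move=> k /andP[_ ki]; rewrite /luce_chain eq_sym (negbTE ki).
rewrite -big_distrl /=.
have -> : \sum_(k in M | k != i) p k M = 1 - p i M
  by rewrite -sum_p [X in _ = X - _](bigD1 i) //= addrAC subrr add0r.
by field.
Qed.

Lemma rho_luce_chain M j : M != finset.set0 -> j \in M ->
  rho (p ^~ M) (luce_chain p M) M j = p j M.
Proof.
move=> M0 jM; have [p_bnd [sum_p _]] := p_scf M0.
rewrite (@rho_reversible _ _ _ _ _ _ _ _ _ (p ^~ M)) /luce ?sum_p ?divr1 //.
- by move=> i k iM kM; rewrite ltW ?luce_chain_gt0.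
- by move=> i iM; apply: sum_luce_chain.
- by move=> i _; apply: (p_bnd i).1.
- by move=> i k iM kM; apply: luce_chain_gt0.
- by move=> i iM; apply: p_pos.
- move=> i k iM kM; rewrite /luce_chain eq_sym; have [-> //|ik] := eqVneq k i.
  exact: mulrCA.
Qed.

Lemma luce_chain_MSC : is_MSC (luce_chain p) (fun M i => p i M).
Proof.
move=> M M0; have [p_bnd [sum_p _]] := p_scf M0.
split; first by move=> i j iM jM; rewrite ltW ?luce_chain_gt0.
split; first by move=> i _; apply: (p_bnd i).1.
split=> //; split.
  move=> i iM; split; last exact: luce_chain_gt0.
  by rewrite -(sum_luce_chain M0 iM) (bigD1 i) //= addrK.
move=> i j iM jM ij; have iN : i \in [set i; j] by rewrite !inE eqxx.
split; first by move=> _; apply: luce_chain_gt0; rewrite ?(mem_set_neq0 iN) ?inE ?eqxx ?orbT.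
rewrite /luce_chain (negbTE ij) eq_sym (negbTE ij).
transitivity (p j [set i; j] * p i M / 4); first by field.
by rewrite -p_IIA //; field.
Qed.

Lemma luce_chain_ratio M i j : M != finset.set0 -> i \in M -> j \in M -> i != j ->
  luce_chain p M i j / luce_chain p M j i = p j [set: X]%SET / p i [set: X]%SET.
Proof.
move=> M0 iM jM ij; rewrite /luce_chain (negbTE ij) eq_sym (negbTE ij).
have pi_neq0 : p i M != 0 by rewrite gt_eqF ?p_pos.
have piT_neq0 : p i [set: X]%SET != 0.
  by rewrite gt_eqF ?p_pos ?(mem_set_neq0 (finset.in_setT i)).
apply/eqP; rewrite eqr_div ?mulf_neq0 //; apply/eqP.
by rewrite -mulrA mulrCA IIA_ratio_setT //; ring.
Qed.

Lemma luce_chain_rationalizes : rationalizes p (luce_chain p) (fun M i => p i M).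
Proof. by move=> M M0 i iM; rewrite rho_luce_chain. Qed.

Lemma luce_chain_reversible M : M != finset.set0 ->
  fully_comparable (luce_chain p) M /\ reversible (luce_chain p) (fun M i => p i M) M.
Proof.
move=> M0; split=> [i j iM jM _|i j iM jM]; first exact: luce_chain_gt0.
rewrite !rho_luce_chain // /luce_chain eq_sym.
by have [->|_] := eqVneq i j; [rewrite mulrC | rewrite mulrAC mulrA].
Qed.

End LuceChain.
End ChoiceFunctions.

Theorem theorem3 (R : realType) (X : finType) (p : X -> {set X} -> R)
  (hp : stochastic_choice p) :
  ((exists (Q : {set X} -> X -> X -> R) (nu : {set X} -> X -> R),
      is_MSC Q nu /\ rationalizes p Q nu /\
      (forall M : {set X}, M != finset.set0 -> fully_comparable Q M /\ reversible Q nu M))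
   <-> (positive_scf p /\ IIA p))
  /\
  ((positive_scf p /\ IIA p) <->
   (exists (Q : {set X} -> X -> X -> R) (nu : {set X} -> X -> R),
      is_MSC Q nu /\ rationalizes p Q nu /\
      exists u : X -> R, (forall x, 0 < u x) /\
        forall M : {set X}, M != finset.set0 -> forall i j, i \in M -> j \in M -> i != j ->
          0 < Q M i j /\ Q M i j / Q M j i = u j / u i)).
Proof.
split; split.
- case=> Q [nu [Q_MSC [p_rat Q_rev]]]; split.
    exact: reversible_rationalized_positive hp p_rat Q_rev.
  exact: reversible_rationalized_IIA Q_MSC p_rat Q_rev.
- case=> pos iia; exists (luce_chain p), (fun M i => p i M).
  split; first exact: luce_chain_MSC.
  by split; [exact: luce_chain_rationalizes | exact: luce_chain_reversible].
- case=> pos iia; exists (luce_chain p), (fun M i => p i M).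
  split; first exact: luce_chain_MSC.
  split; first exact: luce_chain_rationalizes.
  exists (p ^~ [set: X]%SET); split=> [x|M M0 i j iM jM ij].
    by apply: pos (finset.in_setT x); apply: mem_set_neq0 (finset.in_setT x).
  by split; [exact: luce_chain_gt0 | exact: luce_chain_ratio].
- case=> Q [nu [Q_MSC [p_rat [u [u_gt0 Q_ratio]]]]].
  exact: luce_positive_IIA u_gt0 (MSC_balanced_luce Q_MSC p_rat u_gt0 Q_ratio).
Qed.
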